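(* With the setup in the context, for every $X\subseteq E\setminus B$ and every $\mathbf{M}\in A^X$, the set $D_{X,\mathbf{M}}$ is an almost affine code of length $n$ and dimension $n-|X|$ over $A$, whose associated matroid has rank function $r_{D_{X,\mathbf{M}}}(Y)=|Y\setminus(B\cup X)|+r(Y\cap(B\cup X))$ for $Y\subseteq E$. In particular this rank function does not depend on $\mathbf{M}$.
   Context: An almost affine code over a finite alphabet $A$ of length $n$ and dimension $k$ is a subset $C\subseteq A^n$ with $|C|=|A|^k$ such that for every $X\subseteq E=\{1,\dots,n\}$, $\log_{|A|}|C_X|$ is a nonnegative integer ($C_X$ = projection onto coordinates $X$); its associated matroid $M_C$ has rank function $r(X)=\log_{|A|}|C_X|$. Setup: $C$ is an almost affine code of length $n$ and dimension $k$ over $A$ with matroid rank function $r$; $B\subseteq E$ is a basis of $M_C$ (so $|B|=r(B)=k$); $\varphi:A\times A\to A$ is a function such that for every $y\in A$ both $\varphi(y,\cdot)$ and $\varphi(\cdot,y)$ are bijections of $A$. For $\mathbf{m}\in A^{E\setminus B}$, $\Phi_{\mathbf{m}}:A^E\to A^E$ is given by $\Phi_{\mathbf{m}}(\mathbf{w})_i=\mathbf{w}_i$ for $i\in B$ and $\Phi_{\mathbf{m}}(\mathbf{w})_i=\varphi(\mathbf{w}_i,\mathbf{m}_i)$ for $i\in E\setminus B$, and $C_{\mathbf{m}}=\Phi_{\mathbf{m}}(C)$. For $X\subseteq E\setminus B$ and $\mathbf{M}\in A^X$, $D_{X,\mathbf{M}}=\bigcup_{\mathbf{m}\in A^{E\setminus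 B},\ \mathbf{m}_X=\mathbf{M}}C_{\mathbf{m}}$. *)

From mathcomp Require Import all_boot.
Set Implicit Arguments. Unset Strict Implicit. Unset Printing Implicit Defensive.

Notation word A n := {ffun 'I_n -> A}.

(* Projection of a word onto coordinates X (coordinates outside X erased). *)
Definition projw (A : finType) (n : nat) (X : {set 'I_n}) (w : word A n)
  : {ffun 'I_n -> option A} :=
  [ffun i => if i \in X then Some (w i) else None].

Definition projC (A : finType) (n : nat) (C : {set word A n}) (X : {set 'I_n}) :=
  [set projw X w | w in C].

Definition almost_affine (A : finType) (n k : nat) (C : {set word A n}) : Prop :=
  #|C| = #|A| ^ k /\ forall X : {set 'I_n}, exists m : nat, #|projC C X| = #|A| ^ m.

(* r is the rank function of the matroid M_C: r(X) = log_{|A|} |C_X|. *)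
Definition is_code_rank (A : finType) (n : nat) (C : {set word A n})
  (r : {set 'I_n} -> nat) : Prop :=
  forall X : {set 'I_n}, #|projC C X| = #|A| ^ r X.

Definition is_basis (n : nat) (r : {set 'I_n} -> nat) (B : {set 'I_n}) : Prop :=
  r B = #|B| /\ r B = r setT.

Definition Phi (A : finType) (n : nat) (phi : A -> A -> A) (B : {set 'I_n})
  (m : word A n) (w : word A n) : word A n :=
  [ffun i => if i \in B then w i else phi (w i) (m i)].

Definition Cm (A : finType) (n : nat) (phi : A -> A -> A) (B : {set 'I_n})
  (C : {set word A n}) (m : word A n) : {set word A n} :=
  [set Phi phi B m w | w in C].

(* D_{X,M}: union of C_m over all m with m_X = M (values of m on B irrelevant). *)
Definition DXM (A : finType) (n : nat) (phi : A -> A -> A) (B : {set 'I_n})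
  (C : {set word A n}) (X : {set 'I_n}) (M : word A n) : {set word A n} :=
  \bigcup_(m : word A n | [forall i in X, m i == M i]) Cm phi B C m.

From mathcomp Require Import all_boot.
From mathcomp Require Import zify.
Set Implicit Arguments. Unset Strict Implicit.

(* Let W = B ∪ X. On the coordinates of Y ∩ W every code C_m with m_X = M
   looks like C_M, whose projections are in bijection with those of C because
   phi(., y) is injective; on the coordinates of Y \ W the value phi(c_i, m_i)
   is arbitrary because phi(c_i, .) is surjective and m_i is unconstrained.
   Hence the projection of D_{X,M} onto Y is a product of C_{Y ∩ W} and a full
   space A^{Y \ W}, which gives the rank formula; its value on E is
   n - |B| - |X| + r(W) = n - |X|, as r(W) = r(B) = k. *)

Section Projections.
Variables (A : finType) (n : nat).
Implicit Types (C D : {set word A n}) (Y Z : {set 'I_n}) (r : {set 'I_n} -> nat).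

Lemma projC_notin D Y u i : u \in projC D Y -> i \notin Y -> u i = None.
Proof. by case/imsetP=> w _ -> iY; rewrite ffunE (negbTE iY). Qed.

Lemma card_projCT D : #|projC D setT| = #|D|.
Proof.
apply: card_imset => u v /ffunP E; apply/ffunP => i.
by have := E i; rewrite !ffunE in_setT; case.
Qed.

Lemma card_projCS D Y Z : Y \subset Z -> #|projC D Y| <= #|projC D Z|.
Proof.
move=> sYZ.
pose restr (u : {ffun 'I_n -> option A}) := [ffun i => if i \in Y then u i else None].
have -> : projC D Y = restr @: projC D Z.
  rewrite /projC -imset_comp; apply: eq_imset => w /=.
  apply/ffunP => i; rewrite !ffunE.
  by case: ifP => // /(subsetP sYZ) ->.
exact: leq_imset_card.
Qed.

Lemma card_projC_full (a0 : A) Y : #|projC [set: word A n] Y| = #|A| ^ #|Y|.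
Proof.
have -> : projC [set: word A n] Y = [set u in pffun_on None Y (predC1 None)].
  apply/setP => u; rewrite inE; apply/imsetP/pffun_onP.
  - case=> w _ ->; split.
      by apply/supportP => i iY; rewrite ffunE (negbTE iY).
    by move=> _ /imageP[i iY ->]; rewrite ffunE iY.
  - case=> /supportP u_supp u_val; exists [ffun i => odflt a0 (u i)] => //.
    apply/ffunP => i; rewrite !ffunE; case: ifP => iY; last by rewrite u_supp ?iY.
    have : u i \in predC1 None by apply/u_val/imageP; exists i.
    by case: (u i).
by rewrite cardsE card_pffun_on cardC1 card_option.
Qed.

Definition glue Z (u v : {ffun 'I_n -> option A}) : {ffun 'I_n -> option A} :=
  [ffun i => if i \in Z then u i else v i].

Lemma card_glue Z (P Q : {set {ffun 'I_n -> option A}}) :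
  (forall u i, u \in P -> i \notin Z -> u i = None) ->
  (forall v i, v \in Q -> i \in Z -> v i = None) ->
  #|[set glue Z u v | u in P, v in Q]| = #|P| * #|Q|.
Proof.
move=> P_supp Q_supp; rewrite curry_imset2X card_in_imset ?cardsX //.
move=> [u v] [u' v'] /setXP[Pu Qv] /setXP[Pu' Qv'] /= /ffunP E.
congr pair; apply/ffunP => i; have := E i; rewrite /glue !ffunE; case: ifP => iZ //.
- by rewrite (P_supp u) ?(P_supp u') ?iZ.
- by rewrite (Q_supp v) ?(Q_supp v') ?iZ.
Qed.

Lemma code_rank_monotone C r Y Z :
  1 < #|A| -> is_code_rank C r -> Y \subset Z -> r Y <= r Z.
Proof. by move=> A_gt1 rC /(card_projCS C); rewrite !rC leq_exp2l. Qed.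

Lemma code_rank_setT C r k :
  1 < #|A| -> #|C| = #|A| ^ k -> is_code_rank C r -> r setT = k.
Proof.
move=> A_gt1 CE rC; apply/eqP.
by rewrite -(eqn_exp2l _ _ A_gt1) -rC card_projCT CE.
Qed.

End Projections.

Section Translates.
Variables (A : finType) (n : nat) (phi : A -> A -> A) (B : {set 'I_n}).
Variables (C : {set word A n}) (X : {set 'I_n}) (M : word A n).
Hypothesis phi_inj : forall y, injective (phi ^~ y).
Hypothesis phi_surj : forall x z, exists y, phi x y = z.

Lemma card_projC_Cm m Z : #|projC (Cm phi B C m) Z| = #|projC C Z|.
Proof.
pose psi (u : {ffun 'I_n -> option A}) : {ffun 'I_n -> option A} :=
  [ffun i => omap (fun a => if i \in B then a else phi a (m i)) (u i)].
have -> : projC (Cm phi B C m) Z = psi @: projC C Z.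
  rewrite /projC /Cm -!imset_comp; apply: eq_imset => c /=.
  by apply/ffunP => i; rewrite !ffunE; case: (i \in Z); case: (i \in B).
apply: card_imset => u v /ffunP E; apply/ffunP => i.
have := E i; rewrite !ffunE.
case: (u i) => [a|]; case: (v i) => [b|] //= [].
by case: (i \in B) => [-> // | /phi_inj ->].
Qed.

Lemma projC_DXM Y :
  projC (DXM phi B C X M) Y =
  [set glue (Y :&: (B :|: X)) u v | u in projC (Cm phi B C M) (Y :&: (B :|: X)),
                                    v in projC [set: word A n] (Y :\: (B :|: X))].
Proof.
apply/setP => f; apply/imsetP/imset2P.
- case=> _ /bigcupP[m /forallP mX /imsetP[c Cc ->]] ->.
  exists (projw (Y :&: (B :|: X)) (Phi phi B M c))
         (projw (Y :\: (B :|: X)) (Phi phi B m c)).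
  + by apply: imset_f; apply: imset_f.
  + exact: imset_f.
  apply/ffunP => i; have := mX i; rewrite /glue !ffunE !inE.
  by case: (i \in Y); case: (i \in B); case: (i \in X) => //= /eqP ->.
- case=> _ _ /imsetP[_ /imsetP[c Cc ->] ->] /imsetP[w _ ->] ->.
  have hit i : exists y, phi (c i) y == w i.
    by have [y <-] := phi_surj (c i) (w i); exists y.
  pose m : word A n := [ffun i => if i \in X then M i else xchoose (hit i)].
  exists (Phi phi B m c).
    apply/bigcupP; exists m; last exact: imset_f.
    by apply/forallP => i; apply/implyP => iX; rewrite ffunE iX.
  apply/ffunP => i; rewrite /glue !ffunE !inE.
  case: (i \in Y); case: (i \in B); case: (i \in X) => //=.
  by rewrite (eqP (xchooseP (hit i))).
Qed.

Lemma card_projC_DXM (a0 : A) Y :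
  #|projC (DXM phi B C X M) Y| =
  #|A| ^ #|Y :\: (B :|: X)| * #|projC C (Y :&: (B :|: X))|.
Proof.
rewrite projC_DXM card_glue.
- by rewrite card_projC_Cm (card_projC_full a0) mulnC.
- by move=> u i /projC_notin; apply.
- by move=> v i /projC_notin vS /setIP[_ iW]; apply: vS; rewrite inE iW.
Qed.

End Translates.

Theorem mainTheorem8 (A : finType) (n k : nat) (C : {set {ffun 'I_n -> A}})
  (r : {set 'I_n} -> nat) (B : {set 'I_n}) (phi : A -> A -> A) :
  1 < #|A| ->
  almost_affine k C ->
  is_code_rank C r ->
  is_basis r B ->
  #|B| = k ->
  (forall y : A, bijective (phi y)) ->
  (forall y : A, bijective (fun x => phi x y)) ->
  forall (X : {set 'I_n}) (M : {ffun 'I_n -> A}),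
    X \subset ~: B ->
    almost_affine (n - #|X|) (DXM phi B C X M) /\
    is_code_rank (DXM phi B C X M)
      (fun Y => #|Y :\: (B :|: X)| + r (Y :&: (B :|: X))).
Proof.
move=> A_gt1 [CE _] rC [rB _] cardB phiL phiR X M XB.
have /card_gt0P[a0 _] : 0 < #|A| by apply: ltnW.
have phi_inj y : injective (phi ^~ y) by exact: bij_inj.
have phi_surj x z : exists y, phi x y = z.
  by have [g _ gK] := phiL x; exists (g z).
have rD : is_code_rank (DXM phi B C X M)
            (fun Y => #|Y :\: (B :|: X)| + r (Y :&: (B :|: X))).
  by move=> Y; rewrite (card_projC_DXM _ _ _ _ phi_inj phi_surj a0) rC expnD.
split=> //; split; last by move=> Y; eexists; exact: rD.
have rT := code_rank_setT A_gt1 CE rC.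
have rW : r (B :|: X) = k.
  apply/eqP; rewrite eqn_leq -{1}rT (code_rank_monotone _ rC) ?subsetT //=.
  by rewrite -cardB -rB (code_rank_monotone _ rC) ?subsetUl.
rewrite -card_projCT rD setTI setTD rW; congr (_ ^ _).
have BX0 : #|B :&: X| = 0.
  by apply/eqP; rewrite cards_eq0 setI_eq0 disjoint_sym disjoints_subset.
have := cardsUI B X; have := cardsC (B :|: X); rewrite card_ord BX0; lia.
Qed.
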